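(* Let $x,y\in W_0^J$ and let $\sigma\in\mathbb{Q}$ with $0<\sigma<1$. Assume there is a directed $\sigma$-path $x=w_0\xleftarrow{\beta_1}w_1\xleftarrow{\beta_2}\cdots\xleftarrow{\beta_n}w_n=y$ from $y$ to $x$ in the parabolic quantum Bruhat graph. Then $\sigma(x\Lambda-y\Lambda)\in Q_0:=\bigoplus_{j\in I_0}\mathbb{Z}\alpha_j$.
   Context: Let $\Delta_0$ be the finite root system (simple roots $\alpha_j$, coroots $\alpha_j^\vee$, $j\in I_0$) of the finite-dimensional simple Lie algebra underlying an untwisted affine Lie algebra, with positive roots $\Delta_0^+$ and Weyl group $W_0$ generated by simple reflections $r_j$. Let $\lambda=\sum_{i\in I_0}m_i\varpi_i$ ($m_i\in\mathbb{Z}_{\ge0}$) be a level-zero dominant integral weight and $\Lambda$ its class modulo $\mathbb{C}\delta$, with $\langle\Lambda,\alpha_j^\vee\rangle=m_j$ and $W_0$ acting on it. Let $J=\{j\in I_0\mid m_j=0\}$, $W_J=\langle r_j\mid j\in J\rangle$, $\Delta_J^+=\Delta_0^+\cap\bigoplus_{j\in J}\mathbb{Z}\alpha_j$, $W_0^J$ the minimal-length representatives of $W_0/W_J$, $\lfloor w\rfloor$ the representative of $wW_J$, $\ell$ the length, $\rho$, $\rho_J$ the half-sums of positive roots of $\Delta_0$, $\Delta_J$. The parabolic quantum Bruhat graph has vertices $W_0^J$ and an edge $\lfloor wr_\beta\rfloor\xleftarrow{\beta}w$ for $w\in W_0^J$, $\beta\in\Delta_0^+\setminus\Delta_J^+$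 whenever $\ell(\lfloor wr_\beta\rfloor)=\ell(w)+1$ or $\ell(\lfloor wr_\beta\rfloor)=\ell(w)-2\langle\rho-\rho_J,\beta^\vee\rangle+1$. A directed path from $y$ to $x$ is a chain of edges $x=w_0\xleftarrow{\beta_1}w_1\xleftarrow{}\cdots\xleftarrow{\beta_n}w_n=y$; it is a directed $\sigma$-path if $\sigma\langle\Lambda,\beta_k^\vee\rangle\in\mathbb{Z}$ for all $1\le k\le n$. *)

From HB Require Import structures.
From mathcomp Require Import all_boot all_order all_algebra.
From Stdlib Require Import ClassicalEpsilon.
Set Implicit Arguments. Unset Strict Implicit. Unset Printing Implicit Defensive.
Import Order.TTheory GRing.Theory Num.Theory.
Local Open Scope ring_scope.

Definition classb (P : Prop) : bool :=
  if excluded_middle_informative P then true else false.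

Section RootSystems.
Variables (R : realFieldType) (d : nat).
Notation V := 'rV[R]_d.

Definition dotp (u v : V) : R := (u *m v^T) 0 0.
Definition coroot (a : V) : V := (2 / dotp a a) *: a.
Definition pair (l a : V) : R := dotp l (coroot a).
Definition refl (a v : V) : V := v - pair v a *: a.

(* Weyl group elements are matrices M, acting by v |-> v *m M. *)
Definition act (M : 'M[R]_d) (v : V) : V := v *m M.
(* product w1 w2 (first w2, then w1) *)
Definition wmul (w1 w2 : 'M[R]_d) : 'M[R]_d := w2 *m w1.
(* matrix of the reflection r_a : v *m refl_mx a = refl a v *)
Definition refl_mx (a : V) : 'M[R]_d := 1%:M - (coroot a)^T *m a.

Definition root_system (Phi : seq V) : Prop :=
  [/\ 0 \notin Phi,
      (forall v : V, exists c : V -> R, v = \sum_(b <- Phi) c b *: b),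
      (forall a b, a \in Phi -> b \in Phi -> refl a b \in Phi),
      (forall a b, a \in Phi -> b \in Phi -> exists z : int, pair b a = z%:~R) &
      (forall a (c : R), a \in Phi -> c *: a \in Phi -> c = 1 \/ c = -1)].

Definition irreducible_rs (Phi : seq V) : Prop :=
  forall P : pred V,
    (forall a b, a \in Phi -> b \in Phi -> P a -> ~~ P b -> dotp a b = 0) ->
    all P Phi \/ all (predC P) Phi.

Variables (r : nat) (alpha : 'I_r -> V).

Definition is_base (Phi : seq V) : Prop :=
  [/\ (forall i, alpha i \in Phi),
      (forall c : 'I_r -> R, \sum_i c i *: alpha i = 0 -> forall i, c i = 0) &
      (forall b, b \in Phi -> exists c : 'I_r -> int,
          b = \sum_i (c i)%:~R *: alpha i /\
          ((forall i, 0 <= c i) \/ (forall i, c i <= 0)))].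

Definition posroot (Phi : seq V) (b : V) : bool :=
  classb (b \in Phi /\ exists c : 'I_r -> nat, b = \sum_i (c i)%:R *: alpha i).

Definition posrootJ (Phi : seq V) (J : pred 'I_r) (b : V) : bool :=
  posroot Phi b &&
  classb (exists c : 'I_r -> int,
            (forall i, ~~ J i -> c i = 0) /\ b = \sum_i (c i)%:~R *: alpha i).

Definition rho (Phi : seq V) : V :=
  2^-1 *: \sum_(b <- undup Phi | posroot Phi b) b.
Definition rhoJ (Phi : seq V) (J : pred 'I_r) : V :=
  2^-1 *: \sum_(b <- undup Phi | posrootJ Phi J b) b.

Definition word_mx (s : seq 'I_r) : 'M[R]_d :=
  foldr (fun i M => wmul (refl_mx (alpha i)) M) 1%:M s.

Definition has_word (w : 'M[R]_d) (n : nat) : bool :=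
  [exists s : n.-tuple 'I_r, word_mx s == w].

Definition inW (w : 'M[R]_d) : Prop := exists n, has_word w n.

(* length: minimal number of simple reflections (0 outside W_0) *)
Definition wlen (w : 'M[R]_d) : nat :=
  match excluded_middle_informative (exists n, has_word w n) with
  | left H => ex_minn H
  | right _ => 0%N
  end.

Definition inWJ (J : pred 'I_r) (u : 'M[R]_d) : Prop :=
  exists s : seq 'I_r, all J s /\ word_mx s = u.

Definition inWJmin (J : pred 'I_r) (w : 'M[R]_d) : Prop :=
  inW w /\ forall u, inWJ J u -> (wlen w <= wlen (wmul w u))%N.

Definition is_floor (J : pred 'I_r) (w v : 'M[R]_d) : Prop :=
  inWJmin J v /\ exists u, inWJ J u /\ v = wmul w u.

(* edge  v <-(b)- w  of the parabolic quantum Bruhat graph, v = floor(w r_b) *)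
Definition qbg_edge (Phi : seq V) (J : pred 'I_r) (w : 'M[R]_d) (b : V)
    (v : 'M[R]_d) : Prop :=
  [/\ inWJmin J w, posroot Phi b, ~~ posrootJ Phi J b,
      is_floor J (wmul w (refl_mx b)) v &
      (wlen v = (wlen w).+1 \/
       ((wlen v)%:R : R) = (wlen w)%:R - 2 * pair (rho Phi - rhoJ Phi J) b + 1)].

(* x = w_0 <-(b_1)- w_1 <- ... <-(b_n)- w_n, path given as [:: (b_1,w_1); ...; (b_n,w_n)] *)
Fixpoint qbg_path (Phi : seq V) (J : pred 'I_r) (x : 'M[R]_d)
    (p : seq (V * 'M[R]_d)) : Prop :=
  match p with
  | [::] => True
  | (b, w) :: p' => qbg_edge Phi J w b x /\ qbg_path Phi J w p'
  end.

End RootSystems.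

(* Along an edge  v <-(b)- w  we have v = floor(w r_b), and W_J fixes Lam, so
   v Lam = w r_b Lam = w Lam - <Lam, b^vee> w b.  Hence each step of the path
   changes sigma times the weight by the integer sigma <Lam, b^vee> times the root
   w b, which lies in the root lattice Q_0; telescoping along the path gives the
   claim. *)
From HB Require Import structures.
From mathcomp Require Import all_boot all_order all_algebra.
From Stdlib Require Import ClassicalEpsilon.
Set Implicit Arguments. Unset Strict Implicit. Unset Printing Implicit Defensive.
Import Order.TTheory GRing.Theory Num.Theory.
Local Open Scope ring_scope.

Section WeylAction.
Variables (R : realFieldType) (d r : nat) (alpha : 'I_r -> 'rV[R]_d).

Lemma act1 (v : 'rV[R]_d) : act 1%:M v = v.
Proof. by rewrite /act mulmx1. Qed.

Lemma act_wmul (A B : 'M[R]_d) v : act (wmul A B) v = act A (act B v).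
Proof. by rewrite /act /wmul mulmxA. Qed.

Lemma act_refl_mx (a v : 'rV[R]_d) : act (refl_mx a) v = refl a v.
Proof.
rewrite /act /refl_mx /refl /pair /dotp mulmxBr mulmx1 mulmxA.
by rewrite {1}[v *m _]mx11_scalar mul_scalar_mx.
Qed.

Lemma act_wmul_refl_mx (w : 'M[R]_d) (a v : 'rV[R]_d) :
  act (wmul w (refl_mx a)) v = act w v - pair v a *: act w a.
Proof. by rewrite act_wmul act_refl_mx /refl /act mulmxBl -scalemxAl. Qed.

Lemma act_inW_root (Phi : seq 'rV[R]_d) (w : 'M[R]_d) b :
  root_system Phi -> (forall i, alpha i \in Phi) -> inW alpha w ->
  b \in Phi -> act w b \in Phi.
Proof.
move=> [_ _ reflPhi _ _] alphaPhi [n /existsP[s /eqP <-]] bPhi.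
elim: (val s) => [|i t IH] /=; first by rewrite act1.
by rewrite act_wmul act_refl_mx; apply: reflPhi.
Qed.

Lemma act_inWJ_fixed (J : pred 'I_r) (Lam : 'rV[R]_d) (u : 'M[R]_d) :
  (forall j, J j -> pair Lam (alpha j) = 0) -> inWJ alpha J u -> act u Lam = Lam.
Proof.
move=> LamJ [s [sJ <-]]; elim: s sJ => [|i s IH] /=; first by rewrite act1.
by case/andP=> Ji sJ; rewrite act_wmul IH // act_refl_mx /refl LamJ // scale0r subr0.
Qed.

Lemma act_floor (J : pred 'I_r) (Lam : 'rV[R]_d) (w v : 'M[R]_d) :
  (forall j, J j -> pair Lam (alpha j) = 0) -> is_floor alpha J w v ->
  act v Lam = act w Lam.
Proof. by move=> LamJ [_ [u [WJu ->]]]; rewrite act_wmul (act_inWJ_fixed LamJ WJu). Qed.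

Lemma posroot_mem (Phi : seq 'rV[R]_d) b : posroot alpha Phi b -> b \in Phi.
Proof. by rewrite /posroot /classb; case: excluded_middle_informative => // -[]. Qed.

End WeylAction.

Section RootLattice.
Variables (R : realFieldType) (d r : nat) (alpha : 'I_r -> 'rV[R]_d).

Definition in_root_lattice (v : 'rV[R]_d) : Prop :=
  exists c : 'I_r -> int, v = \sum_i (c i)%:~R *: alpha i.

Lemma root_lattice0 : in_root_lattice 0.
Proof. by exists (fun _ => 0); rewrite big1 // => i _; rewrite scale0r. Qed.

Lemma root_latticeB u v :
  in_root_lattice u -> in_root_lattice v -> in_root_lattice (u - v).
Proof.
move=> [cu ->] [cv ->]; exists (fun i => cu i - cv i).
by rewrite -sumrB; apply: eq_bigr => i _; rewrite -scalerBl rmorphB.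
Qed.

Lemma root_latticeZ (z : int) v :
  in_root_lattice v -> in_root_lattice (z%:~R *: v).
Proof.
move=> [c ->]; exists (fun i => z * c i).
by rewrite scaler_sumr; apply: eq_bigr => i _; rewrite scalerA rmorphM.
Qed.

Lemma root_in_root_lattice (Phi : seq 'rV[R]_d) b :
  is_base alpha Phi -> b \in Phi -> in_root_lattice b.
Proof. by move=> [_ _ baseInt] /baseInt[c [-> _]]; exists c. Qed.

End RootLattice.

Lemma qbg_edge_act (R : realFieldType) (d r : nat) (Phi : seq 'rV[R]_d)
    (alpha : 'I_r -> 'rV[R]_d) (J : pred 'I_r) (Lam b : 'rV[R]_d) (w v : 'M[R]_d) :
  (forall j, J j -> pair Lam (alpha j) = 0) -> qbg_edge alpha Phi J w b v ->
  act v Lam = act w Lam - pair Lam b *: act w b.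
Proof.
by move=> LamJ [_ _ _ floor_v _]; rewrite (act_floor LamJ floor_v) act_wmul_refl_mx.
Qed.

Lemma qbg_edge_root (R : realFieldType) (d r : nat) (Phi : seq 'rV[R]_d)
    (alpha : 'I_r -> 'rV[R]_d) (J : pred 'I_r) (b : 'rV[R]_d) (w v : 'M[R]_d) :
  root_system Phi -> is_base alpha Phi -> qbg_edge alpha Phi J w b v ->
  act w b \in Phi.
Proof.
move=> rsPhi [alphaPhi _ _] [[inWw _] posb _ _ _].
exact: act_inW_root rsPhi alphaPhi inWw (posroot_mem posb).
Qed.

Theorem lemma4p6 (R : realFieldType) (d r : nat) (Phi : seq 'rV[R]_d)
    (alpha : 'I_r -> 'rV[R]_d) (Lam : 'rV[R]_d) (m : 'I_r -> nat)
    (x y : 'M[R]_d) (p : seq ('rV[R]_d * 'M[R]_d)) (sigma : rat) :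
  root_system Phi -> irreducible_rs Phi -> is_base alpha Phi ->
  (forall j, pair Lam (alpha j) = (m j)%:R) ->
  let J := [pred j | m j == 0%N] in
  inWJmin alpha J x -> inWJmin alpha J y ->
  0 < sigma < 1 ->
  qbg_path alpha Phi J x p ->
  last x (map snd p) = y ->
  (forall b, b \in map fst p -> exists z : int, ratr sigma * pair Lam b = z%:~R) ->
  exists c : 'I_r -> int,
    ratr sigma *: (act x Lam - act y Lam) = \sum_i (c i)%:~R *: alpha i.
Proof.
move=> rsPhi _ base LamE J _ _ _ path <- sigma_int.
have LamJ j : J j -> pair Lam (alpha j) = 0 by move/eqP; rewrite LamE => ->.
suff : in_root_lattice alpha (ratr sigma *: (act x Lam - act (last x (map snd p)) Lam)) by [].
elim: p x path sigma_int => [|[b w] p IH] x /= => [_ _|[edge path] sigma_int].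
  by rewrite subrr scaler0; apply: root_lattice0.
have [z sigmaE] := sigma_int b (mem_head _ _).
have step : ratr sigma *: (act x Lam - act w Lam) = - (z%:~R *: act w b).
  by rewrite (qbg_edge_act LamJ edge) addrAC subrr add0r scalerN scalerA sigmaE.
set L := act (last w _) Lam.
rewrite (_ : act x Lam - L = act w Lam - L + (act x Lam - act w Lam)); last first.
  by rewrite [RHS]addrC addrA subrK.
rewrite scalerDr step; apply: root_latticeB.
  by apply: IH => // b' b'p; apply: sigma_int; rewrite in_cons b'p orbT.
exact/root_latticeZ/(root_in_root_lattice base)/(qbg_edge_root rsPhi base edge).
Qed.
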